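(* Let $E$ be a pseudo effect algebra satisfying $\sigma$-(RDP). If $m$ is a $\sigma$-additive Jordan signed measure on $E$, then $m^+$, $m^-$ and $|m|$ are $\sigma$-additive.
   Context: Pseudo effect algebra: partial algebra $(E;+,0,1)$ such that for all $a,b,c$: (i) $a+b$ and $(a+b)+c$ exist iff $b+c$ and $a+(b+c)$ exist, and then they are equal; (ii) there is exactly one $d$ and one $e$ with $a+d=e+a=1$; (iii) if $a+b$ exists there are $d,e$ with $a+b=d+a=b+e$; (iv) if $1+a$ or $a+1$ exists then $a=0$. Order: $a\le b$ iff $a+c=b$ for some $c$. For a sequence $\{a_n\}$ such that $b_n=a_1+\cdots+a_n$ exists for all $n$, if $a=\bigvee_n b_n$ exists in $E$ we write $a=\sum_n a_n$. $E$ satisfies $\sigma$-(RDP) if whenever $a_1+a_2=\sum_n b_n$, there are sequences $\{c_{1n}\}_n,\{c_{2n}\}_n$ in $E$ with $a_i=\sum_n c_{in}$ ($i=1,2$) and $b_n=c_{1n}+c_{2n}$ for all $n$ (this implies (RDP)). Signed measure: $m:E\to\mathbb R$ additive on defined sums; measure: nonnegative one; $m$ is $\sigma$-additive if $a_1\le a_2\le\cdots$ with $a=\bigvee_na_n$ in $E$ implies $m(a)=\lim_n m(a_n)$. Jordan signed measure: difference of two measures; $\mathcal J(E)$ is their set ordered by $m_1\le^+m_2$ iff $m_2-m_1$ is a measure, a lattice-ordered group; $m^+:=m\vee0$, $m^-:=-(m\wedge0)$, $|m|:=m^++m^-$. *)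

From Stdlib Require Import Reals.
Open Scope R_scope.
Set Implicit Arguments.

Definition obind {A B : Type} (f : A -> option B) (o : option A) : option B :=
  match o with Some a => f a | None => None end.

Record PEA := {
  carrier :> Type;
  pplus : carrier -> carrier -> option carrier;
  pzero : carrier;
  pone : carrier;
  (* (i): (a+b)+c defined iff a+(b+c) defined, and then equal *)
  pea_assoc : forall a b c,
      obind (fun ab => pplus ab c) (pplus a b) = obind (fun bc => pplus a bc) (pplus b c);
  pea_compl_r : forall a, exists! d, pplus a d = Some pone;
  pea_compl_l : forall a, exists! e, pplus e a = Some pone;
  pea_conj : forall a b s, pplus a b = Some s ->
      exists d e, pplus d a = Some s /\ pplus b e = Some s;
  pea_one : forall a, ((exists x, pplus pone a = Some x) \/ (exists x, pplus a pone = Some x)) ->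
      a = pzero
}.

Section PEAdefs.
Variable E : PEA.

Definition ple (a b : E) : Prop := exists c, pplus E a c = Some b.

Definition is_sup (f : nat -> E) (x : E) : Prop :=
  (forall n, ple (f n) x) /\ (forall y, (forall n, ple (f n) y) -> ple x y).

Fixpoint psum (a : nat -> E) (n : nat) : option E :=
  match n with
  | O => Some (a O)
  | S k => obind (fun s => pplus E s (a (S k))) (psum a k)
  end.

Definition is_sum (a : nat -> E) (x : E) : Prop :=
  exists b : nat -> E, (forall n, psum a n = Some (b n)) /\ is_sup b x.

Definition sigma_RDP : Prop :=
  forall (a1 a2 s : E) (b : nat -> E),
    pplus E a1 a2 = Some s -> is_sum b s ->
    exists c1 c2 : nat -> E,
      is_sum c1 a1 /\ is_sum c2 a2 /\ (forall n, pplus E (c1 n) (c2 n) = Some (b n)).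

Definition signed_measure (m : E -> R) : Prop :=
  forall a b c, pplus E a b = Some c -> m c = m a + m b.

Definition measure (m : E -> R) : Prop :=
  signed_measure m /\ forall a, 0 <= m a.

Definition sigma_additive (m : E -> R) : Prop :=
  forall (a : nat -> E) (x : E),
    (forall n, ple (a n) (a (S n))) -> is_sup a x -> Un_cv (fun n => m (a n)) (m x).

Definition jordan (m : E -> R) : Prop :=
  exists m1 m2, measure m1 /\ measure m2 /\ forall a, m a = m1 a - m2 a.

Definition jle (m1 m2 : E -> R) : Prop := measure (fun a => m2 a - m1 a).

Definition jzero : E -> R := fun _ => 0.

Definition is_join_J (m1 m2 j : E -> R) : Prop :=
  jordan j /\ jle m1 j /\ jle m2 j /\
  forall k, jordan k -> jle m1 k -> jle m2 k -> jle j k.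

Definition is_meet_J (m1 m2 j : E -> R) : Prop :=
  jordan j /\ jle j m1 /\ jle j m2 /\
  forall k, jordan k -> jle k m1 -> jle k m2 -> jle k j.

End PEAdefs.

(* m^+(x) is the supremum of m(b) over b <= x: by (RDP) this supremum is a measure dominating
   m and 0, hence it lies above m \/ 0, and it obviously lies below it. Given a chain a_n with
   supremum x, pick b <= x with m(b) close to m^+(x); splitting b + c = x = sum_n (a_(n+1) - a_n)
   by sigma-(RDP) gives partial sums b_n of b with b_n <= a_n in measure, and sigma-additivity
   of m along b_n gives m^+(a_n) >= m(b_n) -> m(b). Finally m /\ 0 = m - m^+, so m^- and |m|
   are sums of sigma-additive signed measures. *)
From Stdlib Require Import Reals Lra Classical ClassicalEpsilon.
Open Scope R_scope.
Set Implicit Arguments.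
Unset Strict Implicit.

Section PEAAlgebra.
Variable E : PEA.

Lemma pplus_assoc_lr (a b c ab s : E) :
  pplus E a b = Some ab -> pplus E ab c = Some s ->
  exists bc, pplus E b c = Some bc /\ pplus E a bc = Some s.
Proof.
  intros Hab Hs. pose proof (pea_assoc E a b c) as H.
  rewrite Hab in H; simpl in H. rewrite Hs in H.
  destruct (pplus E b c) as [bc|]; simpl in H; [|discriminate].
  exists bc; split; [reflexivity | symmetry; exact H].
Qed.

Lemma pplus_assoc_rl (a b c bc s : E) :
  pplus E b c = Some bc -> pplus E a bc = Some s ->
  exists ab, pplus E a b = Some ab /\ pplus E ab c = Some s.
Proof.
  intros Hbc Hs. pose proof (pea_assoc E a b c) as H.
  rewrite Hbc in H; simpl in H. rewrite Hs in H.
  destruct (pplus E a b) as [ab|]; simpl in H; [|discriminate].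
  exists ab; split; [reflexivity | exact H].
Qed.

Lemma pplus_one_zero : pplus E (pone E) (pzero E) = Some (pone E).
Proof.
  destruct (pea_compl_r E (pone E)) as [d [Hd _]].
  assert (d = pzero E) by (apply pea_one; left; eauto).
  subst; exact Hd.
Qed.

Lemma pplus_zero_one : pplus E (pzero E) (pone E) = Some (pone E).
Proof.
  destruct (pea_compl_l E (pone E)) as [e [He _]].
  assert (e = pzero E) by (apply pea_one; right; eauto).
  subst; exact He.
Qed.

Lemma pplus_x0 (a : E) : pplus E a (pzero E) = Some a.
Proof.
  destruct (pea_compl_l E a) as [e [He _]].
  destruct (pplus_assoc_lr He pplus_one_zero) as [t [Ht Het]].
  destruct (pea_compl_r E e) as [d [_ Huniq]].
  assert (a = t) by (rewrite <- (Huniq _ He); exact (Huniq _ Het)).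
  subst t; exact Ht.
Qed.

Lemma pplus_0x (a : E) : pplus E (pzero E) a = Some a.
Proof.
  destruct (pea_compl_r E a) as [f [Hf _]].
  destruct (pplus_assoc_rl Hf pplus_zero_one) as [t [Ht Htf]].
  destruct (pea_compl_l E f) as [d [_ Huniq]].
  assert (a = t) by (rewrite <- (Huniq _ Hf); exact (Huniq _ Htf)).
  subst t; exact Ht.
Qed.

Lemma pplus_eq0l (u v : E) : pplus E u v = Some (pzero E) -> u = pzero E.
Proof.
  intros Huv.
  destruct (pplus_assoc_lr Huv pplus_zero_one) as [w [Hvw _]].
  assert (v = pzero E) by (apply pea_one; right; eauto).
  subst v. rewrite pplus_x0 in Huv. congruence.
Qed.

Lemma pplus_cancel0 (a x : E) : pplus E a x = Some a -> x = pzero E.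
Proof.
  intros Hax. destruct (pea_compl_l E a) as [e [He _]].
  destruct (pplus_assoc_rl Hax He) as [ea [Hea Heax]].
  rewrite He in Hea. injection Hea as <-.
  apply pea_one; left; eauto.
Qed.

Lemma ple_refl (a : E) : ple E a a.
Proof. exists (pzero E); apply pplus_x0. Qed.

Lemma ple_0x (a : E) : ple E (pzero E) a.
Proof. exists a; apply pplus_0x. Qed.

Lemma ple_antisym (a b : E) : ple E a b -> ple E b a -> a = b.
Proof.
  intros [c Hac] [d Hbd].
  destruct (pplus_assoc_lr Hac Hbd) as [w [Hcd Haw]].
  rewrite (pplus_cancel0 Haw) in Hcd.
  rewrite (pplus_eq0l Hcd), pplus_x0 in Hac. congruence.
Qed.

Lemma pplus_ple (y1 y2 a b c : E) :
  ple E y1 a -> ple E y2 b -> pplus E a b = Some c ->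
  exists z, pplus E y1 y2 = Some z /\ ple E z c.
Proof.
  intros [u Hu] [v Hv] Hab.
  destruct (pplus_assoc_lr Hu Hab) as [w [Hub Hy1w]].
  destruct (pplus_assoc_rl Hv Hub) as [t [Huy2 Htv]].
  destruct (pea_conj E _ _ Huy2) as [d [e [_ Hy2e]]].
  destruct (pplus_assoc_lr Hy2e Htv) as [z [Hev Hy2z]].
  destruct (pplus_assoc_rl Hy2z Hy1w) as [r [Hr Hrz]].
  exists r; split; [exact Hr | exists z; exact Hrz].
Qed.

Lemma is_sup_max (f : nat -> E) (x : E) (k : nat) :
  is_sup E f x -> (forall n, ple E (f n) (f k)) -> x = f k.
Proof.
  intros [Hub Hleast] Hmax.
  apply ple_antisym; [apply Hleast; exact Hmax | apply Hub].
Qed.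

Lemma psum_succ (c u : nat -> E) :
  (forall n, psum E c n = Some (u n)) ->
  forall n, pplus E (u n) (c (S n)) = Some (u (S n)).
Proof.
  intros Hu n. pose proof (Hu (S n)) as H. simpl in H. rewrite (Hu n) in H. exact H.
Qed.

Lemma psum_chain (c u : nat -> E) :
  (forall n, psum E c n = Some (u n)) -> forall n, ple E (u n) (u (S n)).
Proof. intros Hu n. exists (c (S n)). exact (psum_succ Hu n). Qed.

Lemma chain_psum (a : nat -> E) :
  (forall n, ple E (a n) (a (S n))) -> exists d : nat -> E, forall n, psum E d n = Some (a n).
Proof.
  intros Hchain.
  assert (Hstep : forall n, {c | pplus E (a n) c = Some (a (S n))}).
  { intros n; apply constructive_indefinite_description; exact (Hchain n). }
  exists (fun n => match n with O => a O | S j => proj1_sig (Hstep j) end).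
  induction n as [|n IH]; [reflexivity|].
  simpl. rewrite IH. exact (proj2_sig (Hstep n)).
Qed.

Definition seq2 (a b : E) : nat -> E :=
  fun n => match n with O => a | 1%nat => b | _ => pzero E end.

Lemma is_sum_seq2 (a b c : E) : pplus E a b = Some c -> is_sum E (seq2 a b) c.
Proof.
  intros Hab. exists (fun n => match n with O => a | _ => c end). split.
  - induction n as [|n IH]; [reflexivity|].
    simpl. rewrite IH. destruct n; [exact Hab | apply pplus_x0].
  - split.
    + intros [|n]; [exists b; exact Hab | apply ple_refl].
    + intros z Hz. exact (Hz 1%nat).
Qed.

(* Finite (RDP): the sigma-decomposition of y along the sequence a, b, 0, 0, ... is
   stationary from index 1 on, so by antisymmetry y is its second partial sum. *)
Lemma sigma_RDP_split (a b c y : E) :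
  sigma_RDP E -> pplus E a b = Some c -> ple E y c ->
  exists y1 y2, ple E y1 a /\ ple E y2 b /\ pplus E y1 y2 = Some y.
Proof.
  intros HR Hab [w Hyw].
  destruct (HR _ _ _ _ Hyw (is_sum_seq2 Hab)) as [c1 [c2 [[u [Hu Hsup]] [_ Hc]]]].
  assert (Hc1_0 : forall n, c1 (S (S n)) = pzero E).
  { intros n. exact (pplus_eq0l (Hc (S (S n)))). }
  assert (Hu_const : forall n, u (S n) = u 1%nat).
  { induction n as [|n IH]; [reflexivity|].
    pose proof (psum_succ Hu (S n)) as H. rewrite Hc1_0, pplus_x0, IH in H. congruence. }
  assert (Hy : y = u 1%nat).
  { apply (is_sup_max Hsup).
    intros [|n]; [exact (psum_chain Hu 0) | rewrite Hu_const; apply ple_refl]. }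
  exists (c1 O), (c1 1%nat). split; [|split].
  - exists (c2 O); exact (Hc O).
  - exists (c2 1%nat); exact (Hc 1%nat).
  - pose proof (Hu O) as Hu0. simpl in Hu0. injection Hu0 as Hu0.
    rewrite Hy, Hu0. exact (psum_succ Hu 0).
Qed.

End PEAAlgebra.

Section Measures.
Variable E : PEA.

Lemma signed_measure0 (m : E -> R) : signed_measure E m -> m (pzero E) = 0.
Proof. intros Hm. pose proof (Hm _ _ _ (pplus_x0 (pzero E))). lra. Qed.

Lemma measure_ext (f g : E -> R) : (forall a, f a = g a) -> measure E f -> measure E g.
Proof.
  intros Hfg [Hs Hpos]. split.
  - intros a b c Habc. rewrite <- !Hfg. exact (Hs _ _ _ Habc).
  - intros a. rewrite <- Hfg. exact (Hpos a).
Qed.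

Lemma measureD (f g : E -> R) :
  measure E f -> measure E g -> measure E (fun a => f a + g a).
Proof.
  intros [Hfs Hfp] [Hgs Hgp]. split.
  - intros a b c Habc. rewrite (Hfs _ _ _ Habc), (Hgs _ _ _ Habc). ring.
  - intros a. pose proof (Hfp a). pose proof (Hgp a). lra.
Qed.

Lemma measure_mono (mu : E -> R) (a b : E) : measure E mu -> ple E a b -> mu a <= mu b.
Proof.
  intros [Hs Hpos] [c Hc]. rewrite (Hs _ _ _ Hc). pose proof (Hpos c). lra.
Qed.

Lemma measure_psum_le (mu : E -> R) (c e d u v : nat -> E) :
  measure E mu -> (forall n, pplus E (c n) (e n) = Some (d n)) ->
  (forall n, psum E c n = Some (u n)) -> (forall n, psum E d n = Some (v n)) ->
  forall n, mu (u n) <= mu (v n).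
Proof.
  intros [Hs Hpos] Hced Hu Hv.
  assert (Hcd : forall n, mu (c n) <= mu (d n)).
  { intros n. rewrite (Hs _ _ _ (Hced n)). pose proof (Hpos (e n)). lra. }
  induction n as [|n IH].
  - pose proof (Hu O) as H0; pose proof (Hv O) as H1; simpl in H0, H1.
    injection H0 as <-; injection H1 as <-. apply Hcd.
  - rewrite (Hs _ _ _ (psum_succ Hu n)), (Hs _ _ _ (psum_succ Hv n)).
    pose proof (Hcd (S n)). lra.
Qed.

Lemma measure_jordan (f : E -> R) : measure E f -> jordan E f.
Proof.
  intros Hf. exists f, (jzero E). split; [exact Hf|]. split.
  - split; [intros a b c _; unfold jzero; ring | intros a; unfold jzero; lra].
  - intros a; unfold jzero; ring.
Qed.

Lemma jordan_signed_measure (f : E -> R) : jordan E f -> signed_measure E f.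
Proof.
  intros [f1 [f2 [[Hf1 _] [[Hf2 _] Hf]]]] a b c Habc.
  rewrite !Hf, (Hf1 _ _ _ Habc), (Hf2 _ _ _ Habc). ring.
Qed.

Lemma jordan_sub (f g : E -> R) :
  jordan E f -> jordan E g -> jordan E (fun a => f a - g a).
Proof.
  intros [f1 [f2 [Hf1 [Hf2 Hf]]]] [g1 [g2 [Hg1 [Hg2 Hg]]]].
  exists (fun a => f1 a + g2 a), (fun a => f2 a + g1 a).
  split; [apply measureD; assumption|]. split; [apply measureD; assumption|].
  intros a. rewrite Hf, Hg. ring.
Qed.

Lemma jle_intro (f g : E -> R) :
  signed_measure E f -> signed_measure E g -> (forall a, f a <= g a) -> jle E f g.
Proof.
  intros Hf Hg Hfg. split.
  - intros a b c Habc. rewrite (Hf _ _ _ Habc), (Hg _ _ _ Habc). ring.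
  - intros a. pose proof (Hfg a). lra.
Qed.

Lemma jle_le (f g : E -> R) (a : E) : jle E f g -> f a <= g a.
Proof. intros [_ Hpos]. pose proof (Hpos a). simpl in *. lra. Qed.

Lemma jle0x_measure (f : E -> R) : jle E (jzero E) f -> measure E f.
Proof. apply measure_ext. intros a; unfold jzero; ring. Qed.

Lemma sigma_additive_ext (f g : E -> R) :
  (forall a, f a = g a) -> sigma_additive E f -> sigma_additive E g.
Proof.
  intros Hfg Hf a x Hchain Hsup eps Heps.
  destruct (Hf a x Hchain Hsup eps Heps) as [N HN].
  exists N. intros n Hn. rewrite <- !Hfg. exact (HN n Hn).
Qed.

Lemma sigma_additiveD (f g : E -> R) :
  sigma_additive E f -> sigma_additive E g -> sigma_additive E (fun a => f a + g a).
Proof.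
  intros Hf Hg a x Hchain Hsup.
  exact (CV_plus _ _ _ _ (Hf a x Hchain Hsup) (Hg a x Hchain Hsup)).
Qed.

Lemma sigma_additiveN (f : E -> R) : sigma_additive E f -> sigma_additive E (fun a => - f a).
Proof. intros Hf a x Hchain Hsup. exact (CV_opp _ _ (Hf a x Hchain Hsup)). Qed.

End Measures.

Lemma is_lub_approx (S : R -> Prop) (s eps : R) :
  is_lub S s -> 0 < eps -> exists r, S r /\ s - eps < r.
Proof.
  intros [_ Hleast] Heps. apply NNPP; intros Hnone.
  assert (s <= s - eps).
  { apply Hleast. intros r Hr. apply Rnot_lt_le. intros Hlt. apply Hnone; eauto. }
  lra.
Qed.

Section PositivePart.
Variable E : PEA.
Variable m : E -> R.
Hypothesis HR : sigma_RDP E.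

Definition below_values (x : E) : R -> Prop := fun r => exists b, ple E b x /\ r = m b.

Section SupBelow.
Hypothesis Hm : jordan E m.

Lemma below_values_bound (x : E) : bound (below_values x).
Proof.
  destruct Hm as [m1 [m2 [[Hm1 Hm1pos] [[_ Hm2pos] Hm_eq]]]].
  exists (m1 x). intros r [b [[c Hbc] ->]].
  rewrite Hm_eq, (Hm1 _ _ _ Hbc).
  pose proof (Hm1pos c); pose proof (Hm2pos b). lra.
Qed.

Lemma below_values_inhabited (x : E) : exists r, below_values x r.
Proof. exists (m (pzero E)), (pzero E). split; [apply ple_0x | reflexivity]. Qed.

Definition sup_below (x : E) : R :=
  proj1_sig (completeness _ (below_values_bound x) (below_values_inhabited x)).

Lemma sup_below_lub (x : E) : is_lub (below_values x) (sup_below x).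
Proof. exact (proj2_sig (completeness _ (below_values_bound x) (below_values_inhabited x))). Qed.

Lemma sup_below_ge (b x : E) : ple E b x -> m b <= sup_below x.
Proof. intros Hbx. apply (proj1 (sup_below_lub x)). exists b; split; auto. Qed.

Lemma sup_below_additive : signed_measure E sup_below.
Proof.
  pose proof (jordan_signed_measure Hm) as Hms.
  intros a b c Habc. apply Rle_antisym.
  - apply (proj2 (sup_below_lub c)). intros r [y [Hyc ->]].
    destruct (sigma_RDP_split HR Habc Hyc) as [y1 [y2 [Hy1 [Hy2 Hy]]]].
    rewrite (Hms _ _ _ Hy).
    pose proof (sup_below_ge Hy1); pose proof (sup_below_ge Hy2). lra.
  - assert (Hpair : forall y1 y2, ple E y1 a -> ple E y2 b -> m y1 + m y2 <= sup_below c).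
    { intros y1 y2 Hy1 Hy2.
      destruct (pplus_ple Hy1 Hy2 Habc) as [z [Hz Hzc]].
      rewrite <- (Hms _ _ _ Hz). exact (sup_below_ge Hzc). }
    assert (Ha : forall y2, ple E y2 b -> sup_below a <= sup_below c - m y2).
    { intros y2 Hy2. apply (proj2 (sup_below_lub a)). intros r [y1 [Hy1 ->]].
      pose proof (Hpair y1 y2 Hy1 Hy2). lra. }
    assert (sup_below b <= sup_below c - sup_below a).
    { apply (proj2 (sup_below_lub b)). intros r [y2 [Hy2 ->]].
      pose proof (Ha y2 Hy2). lra. }
    lra.
Qed.

Lemma sup_below_measure : measure E sup_below.
Proof.
  split; [exact sup_below_additive|].
  intros a. rewrite <- (signed_measure0 (jordan_signed_measure Hm)). apply sup_below_ge, ple_0x.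
Qed.

Lemma join_zero_lub (p : E -> R) :
  is_join_J E m (jzero E) p -> forall x, is_lub (below_values x) (p x).
Proof.
  intros [_ [Hmp [H0p Hleast]]] x. split.
  - intros r [b [Hbx ->]].
    pose proof (jle_le b Hmp). pose proof (measure_mono (jle0x_measure H0p) Hbx). lra.
  - intros s Hs.
    assert (Hp_sup : jle E p sup_below).
    { apply Hleast.
      - exact (measure_jordan sup_below_measure).
      - apply jle_intro; [exact (jordan_signed_measure Hm) | exact sup_below_additive|].
        intros a. apply sup_below_ge, ple_refl.
      - apply jle_intro; [intros ? ? ? _; unfold jzero; ring | exact sup_below_additive|].
        intros a. exact (proj2 sup_below_measure a). }
    pose proof (jle_le x Hp_sup). pose proof (proj2 (sup_below_lub x) s Hs). lra.
Qed.

End SupBelow.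

Lemma sigma_additive_of_lub (p : E -> R) :
  sigma_additive E m -> measure E p -> (forall x, is_lub (below_values x) (p x)) ->
  sigma_additive E p.
Proof.
  intros Hsig Hp Hlub a x Hchain Hsup eps Heps.
  destruct (is_lub_approx (eps := eps / 2) (Hlub x)) as [r [[b [[c Hbc] ->]] Hb]]; [lra|].
  destruct (chain_psum Hchain) as [d Hd].
  destruct (HR Hbc (ex_intro _ a (conj Hd Hsup)))
    as [c1 [c2 [[u [Hu Hsupu]] [_ Hsplit]]]].
  destruct (Hsig u b (psum_chain Hu) Hsupu (eps / 2)) as [N HN]; [lra|].
  exists N. intros n Hn. specialize (HN n Hn). unfold R_dist in *.
  apply Rabs_def2 in HN.
  assert (m (u n) <= p (u n)).
  { apply (proj1 (Hlub (u n))). exists (u n); split; [apply ple_refl | reflexivity]. }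
  pose proof (measure_psum_le Hp Hsplit Hu Hd n).
  pose proof (measure_mono Hp (proj1 Hsup n)).
  apply Rabs_def1; lra.
Qed.

End PositivePart.

Lemma meet_zero_eq (E : PEA) (m p q : E -> R) :
  jordan E m -> is_join_J E m (jzero E) p -> is_meet_J E m (jzero E) q ->
  forall a, q a = m a - p a.
Proof.
  intros Hm [Hpj [Hmp [H0p Hpleast]]] [Hqj [Hqm [Hq0 Hqleast]]] a.
  pose proof (jordan_signed_measure Hm) as Hms.
  pose proof (jordan_signed_measure Hpj) as Hps.
  pose proof (jordan_signed_measure Hqj) as Hqs.
  assert (Hzero : signed_measure E (jzero E)) by (intros ? ? ? _; unfold jzero; ring).
  pose proof (jordan_signed_measure (jordan_sub Hm Hpj)) as Hmp_s.
  pose proof (jordan_signed_measure (jordan_sub Hm Hqj)) as Hmq_s.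
  assert (Hlow : jle E (fun y => m y - p y) q).
  { apply Hqleast; [exact (jordan_sub Hm Hpj) | apply jle_intro; auto | apply jle_intro; auto].
    - intros y. pose proof (jle_le y H0p). unfold jzero in *. lra.
    - intros y. pose proof (jle_le y Hmp). unfold jzero. lra. }
  assert (Hup : jle E p (fun y => m y - q y)).
  { apply Hpleast; [exact (jordan_sub Hm Hqj) | apply jle_intro; auto | apply jle_intro; auto].
    - intros y. pose proof (jle_le y Hq0). unfold jzero in *. lra.
    - intros y. pose proof (jle_le y Hqm). unfold jzero. lra. }
  pose proof (jle_le a Hlow). pose proof (jle_le a Hup). simpl in *. lra.
Qed.

(* p = m^+ = m \/ 0 and q = m /\ 0 in J(E); then m^- = -q and |m| = p + m^- . *)
Theorem proposition4p6 (E : PEA) (m : E -> R) :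
  sigma_RDP E -> jordan E m -> sigma_additive E m ->
  forall p q : E -> R,
    is_join_J E m (jzero E) p -> is_meet_J E m (jzero E) q ->
    sigma_additive E p /\
    sigma_additive E (fun a => - q a) /\
    sigma_additive E (fun a => p a + - q a).
Proof.
  intros HR Hm Hsig p q Hp Hq.
  assert (Hpsig : sigma_additive E p).
  { apply (sigma_additive_of_lub HR Hsig).
    - destruct Hp as [_ [_ [H0p _]]]. exact (jle0x_measure H0p).
    - exact (join_zero_lub HR Hm Hp). }
  assert (Hqsig : sigma_additive E (fun a => - q a)).
  { apply (sigma_additive_ext (f := fun a => p a + - m a)).
    - intros a. rewrite (meet_zero_eq Hm Hp Hq a). ring.
    - apply sigma_additiveD; [exact Hpsig | exact (sigma_additiveN Hsig)]. }
  split; [exact Hpsig|]. split; [exact Hqsig|].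
  exact (sigma_additiveD Hpsig Hqsig).
Qed.
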